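(* Suppose the coin process $\mathbf X$ satisfies \[ \lim_{m\to\infty}P_{X^m}(\mathcal S_m^c(\lambda))=0\quad\text{for every }\lambda>0, \] where $\mathcal S_m(\lambda)=\{x^m:\log\frac{1}{P_{X^m}(x^m)}\ge\lambda\}$. Then for every $n$ and every target distribution $P_{Y^n}$, the interval algorithm is valid, i.e. $\lim_{m\to\infty}\Pr(\phi_{\mathrm{int}}(X^m)=y^n)=P_{Y^n}(y^n)$ for every $y^n\in\mathcal Y^n$.
   Context: Logarithms are base 2. $\mathcal X=\{1,\dots,M\}$, $\mathcal Y=\{1,\dots,N\}$ are finite sets; the coin process $\mathbf X=\{X^m\}_{m\ge1}$ on $\mathcal X$ and target process $\mathbf Y=\{Y^n\}$ on $\mathcal Y$ are arbitrary processes given by consistent families of distributions. Interval algorithm: for $s\in\mathcal X^i$ define $\mathcal I_s=[\underline\alpha_s,\overline\alpha_s)$ by $\mathcal I_\bot=[0,1)$ and $\underline\alpha_{sx}=\underline\alpha_s+(\overline\alpha_s-\underline\alpha_s)\sum_{k<x}P_{X_{i+1}|X^i}(k|s)$, $\overline\alpha_{sx}=\underline\alpha_s+(\overline\alpha_s-\underline\alpha_s)\sum_{k\le x}P_{X_{i+1}|X^i}(k|s)$ (so $|\mathcal I_s|=P_{X^i}(s)$); define $\mathcal J_t$ for $t\in\mathcal Y^j$ likewise from $P_{Y_{j+1}|Y^j}$. The algorithm stops at the first $m$ with $\mathcal I_{X^m}\subseteq\mathcal J_{y^n}$ for some $y^n\in\mathcal Y^n$ and outputs that $y^n$; $\phi_{\mathrm{int}}(x^m)$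 is the output if it has stopped after reading $x^m$, and $\bot$ otherwise. *)

From Stdlib Require Import Reals List.
Import ListNotations.
Open Scope R_scope.

(* Sequences over an alphabet {0,...,K-1} (0-based relabelling of {1,...,K}). *)
Fixpoint seqs (K m : nat) : list (list nat) :=
  match m with
  | O => [[]]
  | S m' => flat_map (fun s => map (fun k => s ++ [k]) (seq 0 K)) (seqs K m')
  end.

Definition sumR {A} (l : list A) (f : A -> R) : R :=
  fold_right Rplus 0 (map f l).

Definition valid (K : nat) (s : list nat) : Prop := Forall (fun k => (k < K)%nat) s.

(* A process on {0..K-1}: P s = P_{X^m}(s) for |s| = m; consistent family of
   probability distributions. *)
Definition is_process (K : nat) (P : list nat -> R) : Prop :=
  (forall s, valid K s -> 0 <= P s) /\
  (forall m, sumR (seqs K m) P = 1) /\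
  (forall s, valid K s -> sumR (seq 0 K) (fun k => P (s ++ [k])) = P s).

Definition is_dist (K n : nat) (Q : list nat -> R) : Prop :=
  (forall y, valid K y -> length y = n -> 0 <= Q y) /\
  sumR (seqs K n) Q = 1.

Definition marg (K n : nat) (Q : list nat -> R) (t : list nat) : R :=
  sumR (seqs K (n - length t)) (fun u => Q (t ++ u)).

Definition log2 (x : R) : R := ln x / ln 2.

Definition cond (P : list nat -> R) (s : list nat) (k : nat) : R :=
  P (s ++ [k]) / P s.

(* one step of the interval refinement: state (s, lower, upper) *)
Definition istep (P : list nat -> R) (st : list nat * R * R) (x : nat)
  : list nat * R * R :=
  let '(s, a, b) := st in
  (s ++ [x],
   a + (b - a) * sumR (seq 0 x) (cond P s),
   a + (b - a) * sumR (seq 0 (S x)) (cond P s)).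

(* The interval I_s = [lower, upper) *)
Definition interval (P : list nat -> R) (s : list nat) : R * R :=
  let '(_, a, b) := fold_left (istep P) s ([], 0, 1) in (a, b).

Definition containedb (I J : R * R) : bool :=
  if Rle_dec (fst J) (fst I) then (if Rle_dec (snd I) (snd J) then true else false)
  else false.

Definition find_out (P Q : list nat -> R) (N n : nat) (x : list nat)
  : option (list nat) :=
  find (fun y => containedb (interval P x) (interval (marg N n Q) y)) (seqs N n).

(* phi_int(x^m): output at the first prefix length j <= m where the algorithm
   stops; None (= ⊥) if it has not stopped after reading x^m. *)
Definition phi_int (P Q : list nat -> R) (N n : nat) (x : list nat)
  : option (list nat) :=
  (fix go (l : list nat) :=
     match l with
     | [] => None
     | j :: l' => match find_out P Q N n (firstn j x) with
                  | Some y => Some y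
                  | None => go l'
                  end
     end) (seq 0 (S (length x))).

Definition prob_out (P Q : list nat -> R) (M N n m : nat) (y : list nat) : R :=
  sumR (seqs M m) (fun x => P x *
    match phi_int P Q N n x with
    | Some y' => if list_eq_dec Nat.eq_dec y' y then 1 else 0
    | None => 0
    end).

Definition prob_Sc (P : list nat -> R) (M m : nat) (lam : R) : R :=
  sumR (filter (fun x => if Rlt_dec (log2 (/ P x)) lam then true else false)
               (seqs M m)) P.

(* For every m the intervals I_x, x in X^m, tile [0,1) with |I_x| = P(x) and shrink along
   prefixes; likewise the J_y tile [0,1) with |J_y| = P_{Y^n}(y). Hence the algorithm
   outputs y after reading x exactly when I_x is contained in J_y, and Pr(phi(X^m) = y) is
   the total length of the I_x lying inside J_y: at most |J_y|, and short of it only by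
   intervals with an endpoint of J_y in their interior. Such an interval is either longer
   than e, so that log(1/P(x)) < log(1/e) and x lies outside S_m(log(1/e)), or lies within
   e of that endpoint; the deficit is thus at most 2 (P(S_m^c(log(1/e))) + 2 e). *)

From Stdlib Require Import Reals List Lra Lia.
Import ListNotations.
Open Scope R_scope.

Lemma sumR_nil {A} (f : A -> R) : sumR [] f = 0.
Proof. reflexivity. Qed.

Lemma sumR_cons {A} (a : A) (l : list A) (f : A -> R) :
  sumR (a :: l) f = f a + sumR l f.
Proof. reflexivity. Qed.

Lemma sumR_app {A} (l1 l2 : list A) (f : A -> R) :
  sumR (l1 ++ l2) f = sumR l1 f + sumR l2 f.
Proof. induction l1 as [|a l1 IH]; cbn [app]; rewrite ?sumR_cons, ?IH, ?sumR_nil; lra. Qed.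

Lemma sumR_ext_in {A} (l : list A) (f g : A -> R) :
  (forall x, In x l -> f x = g x) -> sumR l f = sumR l g.
Proof.
  induction l as [|a l IH]; intros H; [reflexivity|].
  rewrite !sumR_cons, (H a (or_introl eq_refl)), IH; auto using in_cons.
Qed.

Lemma sumR_le_in {A} (l : list A) (f g : A -> R) :
  (forall x, In x l -> f x <= g x) -> sumR l f <= sumR l g.
Proof.
  induction l as [|a l IH]; intros H; rewrite ?sumR_nil, ?sumR_cons; [lra|].
  apply Rplus_le_compat; auto using in_eq, in_cons.
Qed.

Lemma sumR_nonneg {A} (l : list A) (f : A -> R) :
  (forall x, In x l -> 0 <= f x) -> 0 <= sumR l f.
Proof.
  intros H; apply Rle_trans with (sumR l (fun _ => 0)); [|apply sumR_le_in; exact H].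
  clear H; induction l as [|a l IH]; rewrite ?sumR_nil, ?sumR_cons; lra.
Qed.

Lemma sumR_plus {A} (l : list A) (f g : A -> R) :
  sumR l (fun x => f x + g x) = sumR l f + sumR l g.
Proof. induction l as [|a l IH]; rewrite ?sumR_nil, ?sumR_cons, ?IH; lra. Qed.

Lemma sumR_minus {A} (l : list A) (f g : A -> R) :
  sumR l (fun x => f x - g x) = sumR l f - sumR l g.
Proof. induction l as [|a l IH]; rewrite ?sumR_nil, ?sumR_cons, ?IH; lra. Qed.

Lemma sumR_mult_l {A} (l : list A) (c : R) (f : A -> R) :
  c * sumR l f = sumR l (fun x => c * f x).
Proof. induction l as [|a l IH]; rewrite ?sumR_nil, ?sumR_cons, <- ?IH; lra. Qed.

Lemma sumR_map {A B} (h : A -> B) (l : list A) (f : B -> R) :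
  sumR (map h l) f = sumR l (fun x => f (h x)).
Proof. unfold sumR; now rewrite map_map. Qed.

Lemma sumR_flat_map {A B} (h : A -> list B) (l : list A) (f : B -> R) :
  sumR (flat_map h l) f = sumR l (fun x => sumR (h x) f).
Proof.
  induction l as [|a l IH]; [reflexivity|]; cbn [flat_map].
  now rewrite sumR_app, sumR_cons, IH.
Qed.

Lemma sumR_filter {A} (p : A -> bool) (l : list A) (f : A -> R) :
  sumR (filter p l) f = sumR l (fun x => if p x then f x else 0).
Proof.
  induction l as [|a l IH]; [reflexivity|]; cbn [filter].
  rewrite sumR_cons; destruct (p a); rewrite ?sumR_cons, IH; lra.
Qed.

Lemma sumR_seq_telescope (h : nat -> R) (st K : nat) :
  sumR (seq st K) (fun k => h (S k) - h k) = h (st + K)%nat - h st.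
Proof.
  revert st; induction K as [|K IH]; intros st; cbn [seq].
  - rewrite sumR_nil, Nat.add_0_r; lra.
  - rewrite sumR_cons, IH; replace (st + S K)%nat with (S st + K)%nat by lia; lra.
Qed.

Lemma sumR_seq_split (f : nat -> R) (j K : nat) : (j <= K)%nat ->
  sumR (seq 0 K) f = sumR (seq 0 j) f + sumR (seq j (K - j)) f.
Proof. intros H; replace K with (j + (K - j))%nat at 1 by lia; now rewrite seq_app, sumR_app. Qed.

Lemma valid_snoc (K : nat) (s : list nat) (k : nat) :
  valid K (s ++ [k]) <-> valid K s /\ (k < K)%nat.
Proof.
  unfold valid; rewrite Forall_app; split.
  - intros [H1 H2]; inversion H2; auto.
  - intros [H1 H2]; auto.
Qed.

Lemma seqs_spec (K m : nat) (x : list nat) :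
  In x (seqs K m) <-> valid K x /\ length x = m.
Proof.
  revert x; induction m as [|m IH]; intros x; cbn [seqs].
  - split; [intros [<-|[]]; split; [constructor|reflexivity]|].
    intros [_ Hl]; destruct x; [now left|discriminate].
  - rewrite in_flat_map; split.
    + intros [s [Hs Hx]]; apply in_map_iff in Hx as [k [<- Hk]].
      apply in_seq in Hk; apply IH in Hs as [Hv Hl].
      rewrite valid_snoc, length_app, Hl; cbn; split; [split|]; auto; lia.
    + intros [Hv Hl]; destruct (exists_last (l:=x)) as [s [k ->]]; [intros ->; discriminate|].
      apply valid_snoc in Hv as [Hv Hk]; rewrite length_app in Hl; cbn in Hl.
      exists s; split; [apply IH; split; auto; lia|].
      apply in_map_iff; exists k; split; [reflexivity|apply in_seq; lia].
Qed.

Lemma sumR_seqs_snoc (K m : nat) (f : list nat -> R) :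
  sumR (seqs K (S m)) f =
  sumR (seqs K m) (fun s => sumR (seq 0 K) (fun k => f (s ++ [k]))).
Proof.
  cbn [seqs]; rewrite sumR_flat_map.
  apply sumR_ext_in; intros s _; apply sumR_map.
Qed.

Lemma sumR_seqs_cons (K m : nat) (f : list nat -> R) :
  sumR (seqs K (S m)) f =
  sumR (seq 0 K) (fun k => sumR (seqs K m) (fun u => f (k :: u))).
Proof.
  revert f; induction m as [|m IH]; intros f; rewrite sumR_seqs_snoc.
  - cbn [seqs]; rewrite sumR_cons, sumR_nil, Rplus_0_r.
    apply sumR_ext_in; intros k _; rewrite sumR_cons, sumR_nil, Rplus_0_r; reflexivity.
  - rewrite IH; apply sumR_ext_in; intros k _; now rewrite sumR_seqs_snoc.
Qed.

Lemma interval_nil (F : list nat -> R) : interval F [] = (0, 1).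
Proof. reflexivity. Qed.

Lemma interval_snoc (F : list nat -> R) (s : list nat) (k : nat) :
  let '(a, b) := interval F s in
  interval F (s ++ [k]) =
    (a + (b - a) * sumR (seq 0 k) (cond F s), a + (b - a) * sumR (seq 0 (S k)) (cond F s)).
Proof.
  assert (Hfold : forall t, fold_left (istep F) t ([], 0, 1) =
                              (t, fst (interval F t), snd (interval F t))).
  { unfold interval; induction t as [|x t IH] using rev_ind; [reflexivity|].
    now rewrite !fold_left_app, IH. }
  pose proof (Hfold s) as Hs; destruct (interval F s) as [a b]; cbn in Hs.
  unfold interval; now rewrite fold_left_app, Hs.
Qed.

Record tree_measure (K L : nat) (F : list nat -> R) : Prop := {
  tree_root : F [] = 1;
  tree_nonneg : forall s, valid K s -> (length s <= L)%nat -> 0 <= F s;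
  tree_additive : forall s, valid K s -> (length s < L)%nat ->
    sumR (seq 0 K) (fun k => F (s ++ [k])) = F s }.

Arguments tree_root {K L F}.
Arguments tree_nonneg {K L F}.
Arguments tree_additive {K L F}.

Definition subinterval (I J : R * R) : Prop := fst J <= fst I /\ snd I <= snd J.

Section Intervals.
Variables (K L : nat) (F : list nat -> R).
Hypothesis HF : tree_measure K L F.

Definition prefix_mass (s : list nat) (j : nat) : R :=
  sumR (seq 0 j) (fun i => F (s ++ [i])).

Lemma prefix_mass_S (s : list nat) (k : nat) :
  prefix_mass s (S k) = prefix_mass s k + F (s ++ [k]).
Proof. unfold prefix_mass; rewrite seq_S, sumR_app, sumR_cons, sumR_nil; cbn; lra. Qed.

Lemma prefix_mass_le (s : list nat) (j j' : nat) :
  valid K s -> (length s < L)%nat -> (j <= j' <= K)%nat ->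
  prefix_mass s j <= prefix_mass s j'.
Proof.
  intros Hv Hl Hj; unfold prefix_mass; rewrite (sumR_seq_split _ j j') by lia.
  enough (0 <= sumR (seq j (j' - j)) (fun i => F (s ++ [i]))) by lra.
  apply sumR_nonneg; intros i Hi; apply in_seq in Hi.
  apply (tree_nonneg HF); [apply valid_snoc; split; auto; lia|rewrite length_app; cbn; lia].
Qed.

Lemma prefix_mass_bounds (s : list nat) (j : nat) :
  valid K s -> (length s < L)%nat -> (j <= K)%nat -> 0 <= prefix_mass s j <= F s.
Proof.
  intros Hv Hl Hj; rewrite <- (tree_additive HF s Hv Hl); fold (prefix_mass s K).
  change 0 with (prefix_mass s 0); split; apply prefix_mass_le; auto; lia.
Qed.

(* When [F s = 0] the conditional probabilities are [x / 0] junk, but both sides vanish. *)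
Lemma scaled_sum_cond (s : list nat) (j : nat) :
  valid K s -> (length s < L)%nat -> (j <= K)%nat ->
  F s * sumR (seq 0 j) (cond F s) = prefix_mass s j.
Proof.
  intros Hv Hl Hj; destruct (Req_dec (F s) 0) as [H0|H0].
  - rewrite H0, Rmult_0_l; pose proof (prefix_mass_bounds s j Hv Hl Hj); lra.
  - rewrite sumR_mult_l; apply sumR_ext_in; intros i _; unfold cond; now field.
Qed.

Lemma interval_width (s : list nat) : valid K s -> (length s <= L)%nat ->
  snd (interval F s) - fst (interval F s) = F s.
Proof.
  induction s as [|k s IH] using rev_ind; intros Hv Hl.
  - rewrite interval_nil, (tree_root HF); cbn; lra.
  - apply valid_snoc in Hv as [Hv Hk]; rewrite length_app in Hl; cbn in Hl.
    pose proof (interval_snoc F s k) as E; destruct (interval F s) as [a b]; rewrite E.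
    cbn [fst snd] in IH |- *; rewrite IH, !scaled_sum_cond, prefix_mass_S by (auto; lia); lra.
Qed.

Lemma interval_snoc_mass (s : list nat) (k : nat) :
  valid K (s ++ [k]) -> (length (s ++ [k]) <= L)%nat ->
  interval F (s ++ [k]) =
    (fst (interval F s) + prefix_mass s k, fst (interval F s) + prefix_mass s (S k)).
Proof.
  intros Hv Hl; apply valid_snoc in Hv as [Hv Hk]; rewrite length_app in Hl; cbn in Hl.
  pose proof (interval_width s Hv ltac:(lia)) as W.
  pose proof (interval_snoc F s k) as E; destruct (interval F s) as [a b]; rewrite E.
  cbn [fst snd] in W |- *; now rewrite W, !scaled_sum_cond by (auto; lia).
Qed.

Lemma interval_app_sub (s t : list nat) : valid K (s ++ t) -> (length (s ++ t) <= L)%nat ->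
  subinterval (interval F (s ++ t)) (interval F s).
Proof.
  unfold subinterval; induction t as [|k t IH] using rev_ind; intros Hv Hl.
  - rewrite app_nil_r; lra.
  - rewrite app_assoc in *; pose proof Hv as Hv'; apply valid_snoc in Hv' as [Hv1 Hk].
    rewrite length_app in Hl; cbn in Hl.
    rewrite interval_snoc_mass by (auto; rewrite length_app; cbn; lia); cbn [fst snd].
    pose proof (IH Hv1 ltac:(lia)).
    pose proof (interval_width (s ++ t) Hv1 ltac:(lia)).
    pose proof (prefix_mass_bounds (s ++ t) k Hv1 ltac:(lia) ltac:(lia)).
    pose proof (prefix_mass_bounds (s ++ t) (S k) Hv1 ltac:(lia) ltac:(lia)).
    lra.
Qed.

Lemma interval_sub_unit (s : list nat) : valid K s -> (length s <= L)%nat ->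
  subinterval (interval F s) (0, 1).
Proof. exact (interval_app_sub [] s). Qed.

Lemma interval_disjoint (s s' : list nat) :
  valid K s -> valid K s' -> length s = length s' -> (length s <= L)%nat -> s <> s' ->
  snd (interval F s) <= fst (interval F s') \/ snd (interval F s') <= fst (interval F s).
Proof.
  revert s'; induction s as [|k s IH] using rev_ind; intros s' Hv Hv' Hlen Hl Hne.
  { destruct s'; [congruence|discriminate]. }
  destruct s' as [|k' s' _] using rev_ind; [rewrite length_app in Hlen; cbn in Hlen; lia|].
  rewrite !length_app in Hlen; cbn in Hlen; rewrite length_app in Hl; cbn in Hl.
  pose proof Hv as Hva; pose proof Hv' as Hvb.
  apply valid_snoc in Hva as [Hv1 Hk]; apply valid_snoc in Hvb as [Hv1' Hk'].
  destruct (list_eq_dec Nat.eq_dec s s') as [<-|Hns].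
  - (* siblings occupy consecutive blocks of the parent interval *)
    assert (k <> k') by congruence.
    rewrite !interval_snoc_mass by (auto; rewrite length_app; cbn; lia); cbn [fst snd].
    destruct (Nat.lt_ge_cases k k'); [left|right];
      apply Rplus_le_compat_l, prefix_mass_le; auto; lia.
  - destruct (interval_app_sub s [k]) as [N1 N2]; [auto|rewrite length_app; cbn; lia|].
    destruct (interval_app_sub s' [k']) as [N1' N2']; [auto|rewrite length_app; cbn; lia|].
    destruct (IH s' Hv1 Hv1' ltac:(lia) ltac:(lia) Hns); [left|right]; lra.
Qed.

Lemma sum_level_telescope (g : R -> R) (m : nat) : (m <= L)%nat ->
  sumR (seqs K m) (fun x => g (snd (interval F x)) - g (fst (interval F x))) = g 1 - g 0.
Proof.
  induction m as [|m IH]; intros Hm.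
  { cbn [seqs]; rewrite sumR_cons, sumR_nil, interval_nil; cbn; lra. }
  rewrite sumR_seqs_snoc, <- IH by lia; apply sumR_ext_in; intros s Hs.
  apply seqs_spec in Hs as [Hv Hl].
  set (h j := g (fst (interval F s) + prefix_mass s j)).
  rewrite (sumR_ext_in _ _ (fun k => h (S k) - h k)).
  - rewrite sumR_seq_telescope; unfold h; cbn [Nat.add].
    unfold prefix_mass at 1; rewrite (tree_additive HF s Hv), <- (interval_width s Hv) by lia.
    change (prefix_mass s 0) with 0; f_equal; f_equal; lra.
  - intros k Hk; apply in_seq in Hk.
    now rewrite interval_snoc_mass by (rewrite ?valid_snoc, ?length_app; cbn; try split; auto; lia).
Qed.

End Intervals.

Lemma process_tree_measure (M L : nat) (P : list nat -> R) :
  is_process M P -> tree_measure M L P.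
Proof.
  intros (Hnn & Hsum & Hadd); split; auto.
  specialize (Hsum 0%nat); cbn in Hsum; lra.
Qed.

Lemma marg_tree_measure (N n : nat) (Q : list nat -> R) :
  is_dist N n Q -> tree_measure N n (marg N n Q).
Proof.
  intros [Hnn Hsum]; split.
  - unfold marg; cbn [length]; rewrite Nat.sub_0_r, <- Hsum; reflexivity.
  - intros t Hv Hl; apply sumR_nonneg; intros u Hu; apply seqs_spec in Hu as [Hu Hlu].
    apply Hnn; [apply Forall_app; auto|rewrite length_app; lia].
  - intros t Hv Hl; unfold marg.
    replace (n - length t)%nat with (S (n - length (t ++ [0%nat])))
      by (rewrite length_app; cbn; lia).
    rewrite sumR_seqs_cons; apply sumR_ext_in; intros k _.
    rewrite !length_app; apply sumR_ext_in; intros u _; now rewrite <- app_assoc.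
Qed.

Lemma marg_full (N n : nat) (Q : list nat -> R) (y : list nat) :
  length y = n -> marg N n Q y = Q y.
Proof.
  intros Hl; unfold marg; rewrite Hl, Nat.sub_diag; cbn [seqs].
  rewrite sumR_cons, sumR_nil, app_nil_r; lra.
Qed.

Lemma containedbP (I J : R * R) : reflect (subinterval I J) (containedb I J).
Proof.
  unfold containedb, subinterval.
  destruct (Rle_dec (fst J) (fst I)), (Rle_dec (snd I) (snd J)); constructor; tauto.
Qed.

Definition first_stop (P Q : list nat -> R) (N n : nat) (x : list nat)
  : list nat -> option (list nat) :=
  fix go (l : list nat) :=
    match l with
    | [] => None
    | j :: l' => match find_out P Q N n (firstn j x) with
                 | Some y => Some y
                 | None => go l'
                 end
    end.

Lemma phi_int_first_stop (P Q : list nat -> R) (N n : nat) (x : list nat) :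
  phi_int P Q N n x = first_stop P Q N n x (seq 0 (S (length x))).
Proof. reflexivity. Qed.

Lemma first_stop_Some (P Q : list nat -> R) (N n : nat) (x l : list nat) (z : list nat) :
  first_stop P Q N n x l = Some z ->
  exists j, In j l /\ find_out P Q N n (firstn j x) = Some z.
Proof.
  induction l as [|j l IH]; cbn; [discriminate|].
  destruct (find_out P Q N n (firstn j x)) eqn:E.
  - intros [= <-]; eauto.
  - intros H; destruct (IH H) as [j' []]; eauto.
Qed.

Lemma first_stop_defined (P Q : list nat -> R) (N n : nat) (x l : list nat) (j : nat) :
  In j l -> find_out P Q N n (firstn j x) <> None -> first_stop P Q N n x l <> None.
Proof.
  induction l as [|j' l IH]; cbn; [tauto|]; intros Hin Hf.
  destruct (find_out P Q N n (firstn j' x)) eqn:E; [discriminate|].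
  destruct Hin as [<-|Hin]; [congruence|auto].
Qed.

Section Output.
Variables (M N n : nat) (P Q : list nat -> R).
Hypotheses (HP : is_process M P) (HQ : is_dist N n Q).

Lemma phi_int_Some_sub (x z : list nat) : valid M x ->
  phi_int P Q N n x = Some z ->
  In z (seqs N n) /\ subinterval (interval P x) (interval (marg N n Q) z).
Proof.
  intros Hv Hz; rewrite phi_int_first_stop in Hz.
  apply first_stop_Some in Hz as [j [Hj Hf]]; apply in_seq in Hj.
  apply find_some in Hf as [Hin Hc]; cbv beta in Hc; split; [exact Hin|].
  destruct (containedbP (interval P (firstn j x)) (interval (marg N n Q) z)); [|discriminate].
  rewrite <- (firstn_skipn j x) in Hv.
  pose proof (interval_app_sub M (length x) P (process_tree_measure M _ P HP)
                (firstn j x) (skipn j x) Hv) as Hsub.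
  rewrite firstn_skipn in Hsub; unfold subinterval in *; specialize (Hsub (le_n _)); lra.
Qed.

Lemma phi_int_Some_iff (x y : list nat) : valid M x -> 0 < P x ->
  valid N y -> length y = n ->
  phi_int P Q N n x = Some y <-> subinterval (interval P x) (interval (marg N n Q) y).
Proof.
  intros Hvx HPx Hvy Hly; split.
  { intros Hy; now apply phi_int_Some_sub. }
  intros Hs.
  destruct (phi_int P Q N n x) as [z|] eqn:Ez.
  - destruct (phi_int_Some_sub x z Hvx Ez) as [Hz Hsz]; apply seqs_spec in Hz as [Hvz Hlz].
    destruct (list_eq_dec Nat.eq_dec z y) as [->|Hne]; [reflexivity|exfalso].
    pose proof (interval_width M (length x) P (process_tree_measure M _ P HP) x Hvx (le_n _)).
    (* [I_x] has positive width but would lie in two disjoint intervals *)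
    destruct (interval_disjoint N n _ (marg_tree_measure N n Q HQ) z y)
      as [Hd|Hd]; auto; try lia; unfold subinterval in *; lra.
  - exfalso; revert Ez; rewrite phi_int_first_stop.
    apply (first_stop_defined _ _ _ _ _ _ (length x)); [apply in_seq; lia|].
    rewrite firstn_all; unfold find_out; intros Hn.
    pose proof (find_none _ _ Hn y (proj2 (seqs_spec N n y) (conj Hvy Hly))) as Hf.
    cbv beta in Hf; destruct (containedbP (interval P x) (interval (marg N n Q) y));
      [discriminate|contradiction].
Qed.

Lemma prob_out_contained (m : nat) (y : list nat) : valid N y -> length y = n ->
  prob_out P Q M N n m y =
  sumR (seqs M m)
    (fun x => P x * if containedb (interval P x) (interval (marg N n Q) y) then 1 else 0).
Proof.
  intros Hvy Hly; unfold prob_out; apply sumR_ext_in; intros x Hx.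
  apply seqs_spec in Hx as [Hvx _].
  destruct (Req_dec (P x) 0) as [->|H0]; [lra|].
  assert (HPx : 0 < P x) by (pose proof (proj1 HP x Hvx); lra).
  pose proof (phi_int_Some_iff x y Hvx HPx Hvy Hly) as Hiff.
  destruct (containedbP (interval P x) (interval (marg N n Q) y)) as [Hs|Hs].
  - now rewrite (proj2 Hiff Hs); destruct list_eq_dec.
  - destruct (phi_int P Q N n x) as [z|]; [|reflexivity].
    destruct (list_eq_dec Nat.eq_dec z y) as [->|]; [|reflexivity].
    exfalso; now apply Hs, Hiff.
Qed.

End Output.

Definition clamp (J : R * R) (t : R) : R := Rmax (fst J) (Rmin t (snd J)).

(* the length of the intersection of [I] with [J], for [fst I <= snd I] *)
Definition overlap (J I : R * R) : R := clamp J (snd I) - clamp J (fst I).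

Definition straddle (I : R * R) (t : R) : R :=
  if Rlt_dec (fst I) t then if Rlt_dec t (snd I) then snd I - fst I else 0 else 0.

Ltac case_split_reals :=
  unfold overlap, clamp, straddle, subinterval, Rmax, Rmin in *; cbn [fst snd] in *;
  repeat match goal with
         | |- context [Rle_dec ?x ?y] =>
             lazymatch x with context [Rle_dec] => fail | _ =>
             lazymatch y with context [Rle_dec] => fail | _ => destruct (Rle_dec x y) end end
         | |- context [Rlt_dec ?x ?y] => destruct (Rlt_dec x y)
         end; lra.

Lemma overlap_nonneg (J I : R * R) : fst J <= snd J -> fst I <= snd I -> 0 <= overlap J I.
Proof. intros; case_split_reals. Qed.

Lemma overlap_le_length (J I : R * R) : fst J <= snd J -> overlap J I <= snd J - fst J.
Proof. intros; case_split_reals. Qed.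

Lemma overlap_subinterval (J I : R * R) : subinterval I J -> fst I <= snd I ->
  overlap J I = snd I - fst I.
Proof. intros [? ?] ?; case_split_reals. Qed.

Lemma overlap_not_subinterval (J I : R * R) : fst J <= snd J -> fst I <= snd I ->
  ~ subinterval I J -> overlap J I <= straddle I (fst J) + straddle I (snd J).
Proof.
  intros HJ HI Hns; unfold subinterval in Hns.
  destruct (Rle_dec (fst J) (fst I)), (Rle_dec (snd I) (snd J)); [tauto| | |]; case_split_reals.
Qed.

Lemma overlap_unit (J : R * R) : subinterval J (0, 1) -> fst J <= snd J ->
  overlap J (0, 1) = snd J - fst J.
Proof. intros [? ?] ?; case_split_reals. Qed.

Lemma straddle_nonneg (I : R * R) (t : R) : fst I <= snd I -> 0 <= straddle I t.
Proof. intros; case_split_reals. Qed.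

(* A long interval contributes its length [q]; a short one straddling [t] lies within
   [e] of [t]. *)
Lemma straddle_le (I : R * R) (t e q : R) : fst I <= snd I -> 0 < e -> 0 <= q ->
  (e < snd I - fst I -> q = snd I - fst I) ->
  straddle I t <= q + overlap (t - e, t + e) I.
Proof.
  intros HI He Hq Hlong; destruct (Rlt_dec e (snd I - fst I)) as [H|H].
  - rewrite (Hlong H); pose proof (overlap_nonneg (t - e, t + e) I ltac:(cbn; lra) HI).
    unfold straddle; repeat destruct Rlt_dec; lra.
  - clear Hlong; case_split_reals.
Qed.

Lemma log2_lt (a b : R) : 0 < a -> a < b -> log2 a < log2 b.
Proof.
  intros; unfold log2, Rdiv; apply Rmult_lt_compat_r; [|now apply ln_increasing].
  apply Rinv_0_lt_compat; rewrite <- ln_1; apply ln_increasing; lra.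
Qed.

Section Level.
Variables (M : nat) (P : list nat -> R) (m : nat).
Hypothesis HP : is_process M P.

Let HT : tree_measure M m P := process_tree_measure M m P HP.

Lemma interval_level_width (x : list nat) : In x (seqs M m) ->
  snd (interval P x) - fst (interval P x) = P x /\ 0 <= P x.
Proof.
  intros Hx; apply seqs_spec in Hx as [Hv Hl].
  split; [apply (interval_width M m P HT x Hv); lia|exact (proj1 HP x Hv)].
Qed.

Lemma sum_level_overlap (J : R * R) :
  sumR (seqs M m) (fun x => overlap J (interval P x)) = overlap J (0, 1).
Proof. exact (sum_level_telescope M m P HT (clamp J) m (le_n m)). Qed.

Lemma contained_mass_le (J : R * R) : subinterval J (0, 1) -> fst J <= snd J ->
  sumR (seqs M m) (fun x => P x * if containedb (interval P x) J then 1 else 0)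
  <= snd J - fst J.
Proof.
  intros HJ HJw; rewrite <- (overlap_unit J HJ HJw), <- sum_level_overlap.
  apply sumR_le_in; intros x Hx.
  destruct (interval_level_width x Hx) as [W HPx].
  destruct (containedbP (interval P x) J) as [Hs|].
  - rewrite overlap_subinterval; auto; lra.
  - rewrite Rmult_0_r; apply overlap_nonneg; lra.
Qed.

Lemma contained_mass_ge (J : R * R) : subinterval J (0, 1) -> fst J <= snd J ->
  snd J - fst J
  - sumR (seqs M m) (fun x => P x * if containedb (interval P x) J then 1 else 0)
  <= sumR (seqs M m) (fun x => straddle (interval P x) (fst J))
     + sumR (seqs M m) (fun x => straddle (interval P x) (snd J)).
Proof.
  intros HJ HJw; rewrite <- (overlap_unit J HJ HJw), <- sum_level_overlap at 1.
  rewrite <- sumR_minus, <- sumR_plus; apply sumR_le_in; intros x Hx.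
  destruct (interval_level_width x Hx) as [W HPx].
  pose proof (straddle_nonneg (interval P x) (fst J) ltac:(lra)).
  pose proof (straddle_nonneg (interval P x) (snd J) ltac:(lra)).
  destruct (containedbP (interval P x) J) as [Hs|Hs].
  - rewrite overlap_subinterval; auto; lra.
  - rewrite Rmult_0_r, Rminus_0_r; apply overlap_not_subinterval; auto; lra.
Qed.

(* Intervals longer than [e] are atoms of probability above [e], i.e. outside [S_m]. *)
Lemma sum_straddle_le (t e : R) : 0 < e < 1 ->
  sumR (seqs M m) (fun x => straddle (interval P x) t) <= prob_Sc P M m (log2 (/ e)) + 2 * e.
Proof.
  intros He; unfold prob_Sc; rewrite sumR_filter.
  apply Rle_trans with (sumR (seqs M m) (fun x =>
    (if (if Rlt_dec (log2 (/ P x)) (log2 (/ e)) then true else false) then P x else 0)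
    + overlap (t - e, t + e) (interval P x))).
  - apply sumR_le_in; intros x Hx; destruct (interval_level_width x Hx) as [W HPx].
    apply straddle_le; [lra|lra| |].
    + destruct Rlt_dec; lra.
    + intros Hlong; destruct Rlt_dec as [|Hn]; [lra|exfalso; apply Hn].
      apply log2_lt; [apply Rinv_0_lt_compat; lra|apply Rinv_lt_contravar; nra].
  - rewrite sumR_plus, sum_level_overlap.
    pose proof (overlap_le_length (t - e, t + e) (0, 1)); cbn in *; lra.
Qed.

End Level.

Lemma prob_out_deviation (M N n : nat) (P Q : list nat -> R) (m : nat) (y : list nat) (e : R) :
  is_process M P -> is_dist N n Q -> valid N y -> length y = n -> 0 < e < 1 ->
  Rabs (prob_out P Q M N n m y - Q y) <= 2 * (prob_Sc P M m (log2 (/ e)) + 2 * e).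
Proof.
  intros HP HQ Hvy Hly He.
  set (J := interval (marg N n Q) y).
  pose proof (marg_tree_measure N n Q HQ) as HT.
  assert (HJw : snd J - fst J = Q y).
  { unfold J; rewrite (interval_width N n _ HT y Hvy) by lia; now apply marg_full. }
  assert (HJ : subinterval J (0, 1)) by (apply (interval_sub_unit N n _ HT); auto; lia).
  assert (HQy : 0 <= Q y) by (apply (proj1 HQ); auto).
  rewrite (prob_out_contained M N n P Q HP HQ m y Hvy Hly); fold J.
  pose proof (contained_mass_le M P m HP J HJ ltac:(lra)).
  pose proof (contained_mass_ge M P m HP J HJ ltac:(lra)).
  pose proof (sum_straddle_le M P m HP (fst J) e He).
  pose proof (sum_straddle_le M P m HP (snd J) e He).
  apply Rabs_le; lra.
Qed.

Theorem corollary1 (M N : nat) (P : list nat -> R) :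
  is_process M P ->
  (forall lam : R, 0 < lam -> Un_cv (fun m => prob_Sc P M m lam) 0) ->
  forall (n : nat) (Q : list nat -> R), is_dist N n Q ->
  forall y : list nat, valid N y -> length y = n ->
    Un_cv (fun m => prob_out P Q M N n m y) (Q y).
Proof.
  intros HP HSc n Q HQ y Hvy Hly eps Heps.
  set (e := Rmin (eps / 8) (1 / 2)).
  assert (He : 0 < e < 1).
  { unfold e; pose proof (Rmin_r (eps / 8) (1 / 2)); split; [apply Rmin_glb_lt|]; lra. }
  assert (Hlam : 0 < log2 (/ e)).
  { replace 0 with (log2 1) by (unfold log2; rewrite ln_1; lra).
    apply log2_lt; [lra|]; rewrite <- Rinv_1; apply Rinv_lt_contravar; lra. }
  destruct (HSc _ Hlam (eps / 4) ltac:(lra)) as [m0 Hm0].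
  exists m0; intros m Hm; specialize (Hm0 m Hm); unfold R_dist in *.
  rewrite Rminus_0_r in Hm0; apply Rabs_def2 in Hm0 as [HSc_small _].
  assert (He_small : e <= eps / 8) by apply Rmin_l.
  pose proof (prob_out_deviation M N n P Q m y e HP HQ Hvy Hly He); lra.
Qed.
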